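(* Let $A$ be a complex vector space of countable dimension, and let $\mu\colon A^*\to A$ and $\nu\colon A^*\to A$ be linear maps such that $\alpha(\mu(\beta))=\beta(\nu(\alpha))$ for all $\alpha,\beta\in A^*$. Then $\mathrm{im}\,\mu$ and $\mathrm{im}\,\nu$ are finite-dimensional and $\dim\mathrm{im}\,\mu=\dim\mathrm{im}\,\nu$. *)

From mathcomp Require Import all_boot all_algebra complex reals.
Set Implicit Arguments. Unset Strict Implicit. Unset Printing Implicit Defensive.
Import GRing.Theory.
Local Open Scope ring_scope.

Section LinAlg.
Variables (K : fieldType) (V : lmodType K).

Definition lin_indep (I : eqType) (e : I -> V) : Prop :=
  forall (s : seq I) (c : I -> K), uniq s ->
    \sum_(i <- s) c i *: e i = 0 -> forall i, i \in s -> c i = 0.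

Definition spans (I : Type) (e : I -> V) : Prop :=
  forall v : V, exists (s : seq I) (c : I -> K), v = \sum_(i <- s) c i *: e i.

Definition is_basis (I : eqType) (e : I -> V) : Prop := lin_indep e /\ spans e.

Definition countable_dim : Prop :=
  exists (I : countType) (e : I -> V), is_basis e.

Definition has_dim (S : V -> Prop) (n : nat) : Prop :=
  exists b : 'I_n -> V,
    (forall i, S (b i)) /\ lin_indep b /\
    (forall v, S v -> exists c : 'I_n -> K, v = \sum_(i < n) c i *: b i).

Definition algdual := {scalar V}.

(* A map f : V^* -> W is linear (for the pointwise vector space structure on V^* ). *)
Definition dual_linear (W : lmodType K) (f : algdual -> W) : Prop :=
  forall (a : K) (alpha beta gamma : algdual),
    (forall x, gamma x = a * alpha x + beta x) ->
    f gamma = a *: f alpha + f beta.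

Definition img (T W : Type) (f : T -> W) : W -> Prop := fun w => exists t, f t = w.

End LinAlg.

From mathcomp Require Import all_boot all_algebra complex reals boolp.
From HB Require Import structures.
Set Implicit Arguments. Unset Strict Implicit. Unset Printing Implicit Defensive.
Import GRing.Theory.
Local Open Scope ring_scope.

(* Fix a basis (e_i) of A with coordinate functionals e'_i.  The pairing identity
   gives e'_k (nu e'_j) = e'_j (mu e'_k), so the matrix M k j := e'_k (nu e'_j) has
   finitely many nonzero entries in every row and every column, and moreover
   e'_j (mu beta) = beta (nu e'_j).  If infinitely many columns nu e'_j were nonzero, a
   gliding hump argument would give indices k_n, j_n with M (k_n) (j_m) <> 0 iff m = n;
   the functional beta := sum_n e'_(k_n), well defined because vectors have finite
   support, would then give mu beta infinitely many nonzero coordinates.  Hence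
   nu e'_j = 0 outside a finite set J of indices, and mu and nu are then given by a
   finite matrix and its transpose, whose ranks agree. *)

Lemma big_uniq_supp (M : nmodType) (I : eqType) (r s : seq I) (F : I -> M) :
  uniq r -> uniq s -> (forall i, F i != 0 -> (i \in r) = (i \in s)) ->
  \sum_(i <- r) F i = \sum_(i <- s) F i.
Proof.
move=> r_uniq s_uniq rs; apply: perm_big_supp.
apply: uniq_perm; rewrite ?filter_uniq // => i; rewrite !mem_filter.
by case: (boolP (F i != 0)) => // /rs ->.
Qed.

Section FiniteFamilies.
Variables (K : fieldType) (V : lmodType K).

Lemma lin_indep_fin (T : finType) (f : T -> V) :
  (forall c : T -> K, \sum_t c t *: f t = 0 -> forall t, c t = 0) -> lin_indep f.
Proof.
move=> free s c s_uniq sum0 t ts.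
pose d t := if t \in s then c t else 0.
suff /free/(_ t) : \sum_t d t *: f t = 0 by rewrite /d ts.
rewrite (big_uniq_supp (index_enum_uniq T) s_uniq) => [|i].
  by rewrite -{}[RHS]sum0; apply: eq_big_seq => i i_s; rewrite /d i_s.
by rewrite mem_index_enum /d; case: (i \in s) => //; rewrite scale0r eqxx.
Qed.

Definition lincomb n (f : 'I_n -> V) (y : 'rV[K]_n) : V := \sum_l y 0 l *: f l.

Lemma lincomb_is_linear n (f : 'I_n -> V) : linear (lincomb f).
Proof.
move=> a y z; rewrite /lincomb scaler_sumr -big_split /=.
by apply: eq_bigr => l _; rewrite !mxE scalerDl scalerA.
Qed.

HB.instance Definition _ n (f : 'I_n -> V) :=
  GRing.isLinear.Build K 'rV[K]_n V *:%R (lincomb f) (lincomb_is_linear f).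

Lemma lincomb_mulmx m n (f : 'I_n -> V) (x : 'rV_m) (H : 'M_(m, n)) :
  lincomb f (x *m H) = \sum_i x 0 i *: lincomb f (row i H).
Proof. by rewrite mulmx_sum_row linear_sum; under eq_bigr do rewrite linearZ. Qed.

Lemma has_dim_img_lincomb m n (f : 'I_n -> V) (H : 'M[K]_(m, n)) :
  (forall y, lincomb f y = 0 -> y = 0) ->
  has_dim (img (fun x : 'rV_m => lincomb f (x *m H))) (\rank H).
Proof.
move=> f_free; have H_base : (row_base H :=: H)%MS := eq_row_base H.
exists (fun i => lincomb f (row i (row_base H))); split; [|split].
- move=> i; have /submxP[x ->] : (row i (row_base H) <= H)%MS.
    by rewrite -H_base row_sub.
  by exists x.
- apply: lin_indep_fin => c.
  have -> : \sum_i c i *: lincomb f (row i (row_base H))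
           = lincomb f ((\row_i c i) *m row_base H).
    by rewrite lincomb_mulmx; apply: eq_bigr => i _; rewrite mxE.
  move/f_free/eqP; rewrite mulmx_free_eq0 ?row_base_free // => /eqP/rowP c0 i.
  by have := c0 i; rewrite !mxE.
- move=> _ [x <-]; have /submxP[y ->] : (x *m H <= row_base H)%MS.
    by rewrite H_base submxMl.
  by exists (fun i => y 0 i); rewrite lincomb_mulmx.
Qed.

Lemma has_dim_img_factor (T U : Type) (f : T -> V) (g : U -> V) (h : T -> U) n :
  has_dim (img g) n -> (forall t, f t = g (h t)) -> (forall u, exists t, h t = u) ->
  has_dim (img f) n.
Proof.
move=> [b [b_img [b_indep b_span]]] fgh h_surj; exists b; split; [|split] => //.
- by move=> i; have [u <-] := b_img i; have [t <-] := h_surj u; exists t.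
- by move=> _ [t <-]; apply: b_span; exists (h t).
Qed.

End FiniteFamilies.

Section HamelBasis.
Variables (K : fieldType) (V : lmodType K) (I : eqType) (e : I -> V).
Hypothesis basis_e : is_basis e.

Lemma basis_repr v : exists sc : seq I * (I -> K),
  [/\ uniq sc.1, forall i, sc.2 i != 0 -> i \in sc.1
    & v = \sum_(i <- sc.1) sc.2 i *: e i].
Proof.
have [_ /(_ v) [s [c ->]]] := basis_e.
exists (undup s, fun i => c i *+ count_mem i s); split => /=.
- exact: undup_uniq.
- by move=> i; rewrite mem_undup; apply: contraR => /count_memPn ->; rewrite mulr0n.
- by rewrite -big_undup_iterop_count; apply: eq_bigr => i _; rewrite -scalerMnl.
Qed.

Lemma basis_repr_unique s1 c1 s2 c2 : uniq s1 -> uniq s2 ->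
  (forall i, c1 i != 0 -> i \in s1) -> (forall i, c2 i != 0 -> i \in s2) ->
  \sum_(i <- s1) c1 i *: e i = \sum_(i <- s2) c2 i *: e i -> c1 =1 c2.
Proof.
move=> s1_uniq s2_uniq c1_s1 c2_s2 eq12 i.
pose u := undup (s1 ++ s2); have u_uniq : uniq u := undup_uniq _.
have sum_u (c : I -> K) (s : seq I) : uniq s -> (forall j, c j != 0 -> j \in s) ->
    {subset s <= u} -> \sum_(j <- s) c j *: e j = \sum_(j <- u) c j *: e j.
  move=> s_uniq c_s su; apply: big_uniq_supp => // j.
  by rewrite scaler_eq0 negb_or => /andP[/c_s js _]; rewrite js su.
have sub1 : {subset s1 <= u} by move=> j js; rewrite mem_undup mem_cat js.
have sub2 : {subset s2 <= u} by move=> j js; rewrite mem_undup mem_cat js orbT.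
have : \sum_(j <- u) (c1 j - c2 j) *: e j = 0.
  under eq_bigr do rewrite scalerBl.
  by rewrite sumrB -(sum_u c1 s1) // -(sum_u c2 s2) // eq12 subrr.
have [indep _] := basis_e; move=> /(indep u _ u_uniq) c12.
case: (boolP (i \in u)) => [/c12/eqP | iu]; first by rewrite subr_eq0 => /eqP.
have c0 (c : I -> K) (s : seq I) :
    (forall j, c j != 0 -> j \in s) -> {subset s <= u} -> c i = 0.
  by move=> c_s su; apply: contraNeq iu => /c_s /su.
by rewrite (c0 c1 s1) ?(c0 c2 s2).
Qed.

Let repr v := sval (cid (basis_repr v)).
Let reprP v := svalP (cid (basis_repr v)).

Definition supp v : seq I := (repr v).1.
Definition coord k v : K := (repr v).2 k.

Lemma supp_uniq v : uniq (supp v).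
Proof. by case: (reprP v). Qed.

Lemma coord_supp k v : coord k v != 0 -> k \in supp v.
Proof. by case: (reprP v) => _ /(_ k). Qed.

Lemma coord_expand v : v = \sum_(k <- supp v) coord k v *: e k.
Proof. by case: (reprP v). Qed.

Lemma coordE s c v : uniq s -> (forall i, c i != 0 -> i \in s) ->
  v = \sum_(i <- s) c i *: e i -> forall k, coord k v = c k.
Proof.
move=> s_uniq c_s vE.
apply: (@basis_repr_unique (supp v) (coord^~ v) s c) => //.
- exact: supp_uniq.
- by move=> i; apply: coord_supp.
- by rewrite -coord_expand.
Qed.

Lemma coord_expand_on v u : uniq u -> (forall k, coord k v != 0 -> k \in u) ->
  v = \sum_(k <- u) coord k v *: e k.
Proof.
move=> u_uniq v_u; rewrite {1}[v]coord_expand.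
apply: big_uniq_supp (supp_uniq v) u_uniq _ => k.
by rewrite scaler_eq0 negb_or => /andP[vk _]; rewrite coord_supp // v_u.
Qed.

Lemma coord_is_linear k : linear_for *%R (coord k).
Proof.
move=> a v w; pose u := undup (supp v ++ supp w); have u_uniq : uniq u := undup_uniq _.
have v_u i : coord i v != 0 -> i \in u.
  by move/coord_supp => iv; rewrite mem_undup mem_cat iv.
have w_u i : coord i w != 0 -> i \in u.
  by move/coord_supp => iw; rewrite mem_undup mem_cat iw orbT.
apply: (@coordE u (fun i => a * coord i v + coord i w)) => // [i|].
  apply: contraR => iu.
  by rewrite (contraNeq (@v_u i)) ?(contraNeq (@w_u i)) ?mulr0 ?addr0.
rewrite {1}(coord_expand_on u_uniq v_u) {1}(coord_expand_on u_uniq w_u).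
rewrite scaler_sumr -big_split /=.
by apply: eq_bigr => i _; rewrite scalerDl scalerA.
Qed.

HB.instance Definition _ k :=
  GRing.isLinear.Build K V K *%R (coord k) (coord_is_linear k).

Lemma coord_basis k i : coord k (e i) = (k == i)%:R.
Proof.
apply: (@coordE [:: i] (fun k => (k == i)%:R)) => // [j|].
  by rewrite inE; case: (j == i) => //=; rewrite mulr0n eqxx.
by rewrite big_seq1 eqxx scale1r.
Qed.

Lemma coord_inj v w : (forall k, coord k v = coord k w) -> v = w.
Proof.
move=> vw; rewrite [LHS]coord_expand [RHS]coord_expand.
under eq_bigr do rewrite vw.
apply: big_uniq_supp (supp_uniq v) (supp_uniq w) _ => k.
by rewrite scaler_eq0 negb_or => /andP[wk _]; rewrite (coord_supp wk) coord_supp ?vw.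
Qed.

Definition dual_ext (b : I -> K) v : K := \sum_(k <- supp v) b k * coord k v.

Lemma dual_extE b v u : uniq u -> (forall k, b k * coord k v != 0 -> k \in u) ->
  dual_ext b v = \sum_(k <- u) b k * coord k v.
Proof.
move=> u_uniq v_u; apply: big_uniq_supp (supp_uniq v) u_uniq _ => k bv.
rewrite v_u //; move: bv; rewrite mulf_eq0 negb_or => /andP[_ /coord_supp].
by move=> ->.
Qed.

Lemma dual_ext_is_linear b : linear_for *%R (dual_ext b).
Proof.
move=> a v w; pose u := undup (supp v ++ supp w ++ supp (a *: v + w)).
have u_uniq : uniq u := undup_uniq _.
have in_u x : {subset supp x <= u} -> forall k, b k * coord k x != 0 -> k \in u.
  by move=> xu k; rewrite mulf_eq0 negb_or => /andP[_ /coord_supp/xu].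
have [vu wu avwu] : [/\ {subset supp v <= u}, {subset supp w <= u}
                       & {subset supp (a *: v + w) <= u}].
  by split=> k kx; rewrite mem_undup !mem_cat kx ?orbT.
rewrite (dual_extE u_uniq (in_u _ avwu)) (dual_extE u_uniq (in_u _ vu)).
rewrite (dual_extE u_uniq (in_u _ wu)) mulr_sumr -big_split.
by apply: eq_bigr => k _; rewrite linearP mulrDr mulrCA.
Qed.

HB.instance Definition _ b :=
  GRing.isLinear.Build K V K *%R (dual_ext b) (dual_ext_is_linear b).

Lemma dual_ext_basis b i : dual_ext b (e i) = b i.
Proof.
rewrite (@dual_extE b (e i) [:: i]) => [|//|k].
  by rewrite big_seq1 coord_basis eqxx mulr1.
by rewrite coord_basis inE; case: (k == i) => //=; rewrite mulr0n mulr0 eqxx.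
Qed.

Lemma dual_interp (T : finType) (iota : T -> I) (x : T -> K) : injective iota ->
  exists beta : {scalar V}, forall t, beta (e (iota t)) = x t.
Proof.
move=> iota_inj; pose b k := if [pick t | iota t == k] is Some t then x t else 0.
exists (dual_ext b) => t; rewrite /= dual_ext_basis /b.
by case: pickP => [t' /eqP/iota_inj -> | /(_ t)]; rewrite ?eqxx.
Qed.

Lemma coord_lincomb n (iota : 'I_n -> I) (y : 'rV_n) l : injective iota ->
  coord (iota l) (lincomb (e \o iota) y) = y 0 l.
Proof.
move=> iota_inj; rewrite linear_sum (bigD1 l) //= linearZ /= coord_basis eqxx mulr1.
rewrite big1 ?addr0 // => l' l'l.
by rewrite linearZ /= coord_basis (inj_eq iota_inj) eq_sym (negbTE l'l) mulr0.
Qed.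

Lemma lincomb_basis_eq0 n (iota : 'I_n -> I) : injective iota ->
  forall y : 'rV_n, lincomb (e \o iota) y = 0 -> y = 0.
Proof.
move=> iota_inj y y0; apply/rowP => l.
by rewrite -(coord_lincomb y l iota_inj) y0 linear0 mxE.
Qed.

End HamelBasis.

Section GlidingHump.
Variables (I J : eqType) (R : I -> J -> Prop).
Variables (col_supp : J -> seq I) (row_supp : I -> seq J).
Hypotheses (R_col : forall k j, R k j -> k \in col_supp j)
           (R_row : forall k j, R k j -> j \in row_supp k)
           (R_infinite : forall S : seq J, exists2 j, j \notin S & exists k, R k j).

Lemma gliding_hump :
  exists (k : nat -> I) (j : nat -> J), forall m n, R (k n) (j m) <-> m = n.
Proof.
have step_ex (S : seq I) :
    exists kj : I * J, R kj.1 kj.2 /\ forall k, k \in S -> ~ R k kj.2.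
  have [j j_S [k Rkj]] := R_infinite (flatten [seq row_supp k | k <- S]).
  exists (k, j); split => // k' k'S /R_row jk'; case/negP: j_S.
  by apply/flatten_mapP; exists k'.
have [step stepP] := choice step_ex.
pose S n := iter n (fun S => S ++ col_supp (step S).2) [::].
pose k n := (step (S n)).1; pose j n := (step (S n)).2.
have R_kj n : R (k n) (j n) := (stepP _).1.
have avoid n i : i \in S n -> ~ R i (j n) := (stepP _).2 i.
have S_mono m n : (m <= n)%N -> {subset S m <= S n}.
  move=> mn; rewrite -(subnK mn); elim: (n - m)%N => // d IH i /IH iS.
  by rewrite addSn /= mem_cat iS.
have col_S n : {subset col_supp (j n) <= S n.+1}.
  by move=> i iS; rewrite /= mem_cat iS orbT.
exists k, j => m n; split=> [Rnm | ->] //.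
case: (ltngtP m n) => // [mn | nm].
- by case: (avoid n (k n) (S_mono _ _ mn _ (col_S m _ (R_col Rnm))) (R_kj n)).
- by case: (avoid m (k n) (S_mono _ _ nm _ (col_S n _ (R_col (R_kj n)))) Rnm).
Qed.

End GlidingHump.

Section PairedMaps.
Variables (K : fieldType) (V : lmodType K) (I : eqType) (e : I -> V).
Hypothesis basis_e : is_basis e.
Variables mu nu : algdual V -> V.
Hypothesis pairing : forall alpha beta : algdual V, alpha (mu beta) = beta (nu alpha).

Local Notation coord := (coord basis_e).
Local Notation supp := (supp basis_e).

Lemma finite_nu_coord :
  exists2 J : seq I, uniq J & forall j, j \notin J -> nu (coord j) = 0.
Proof.
apply: contrapT => not_finite.
have infinite (S : seq I) :
    exists2 j, j \notin S & exists k, coord k (nu (coord j)) != 0.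
  apply: contrapT => none; apply: not_finite; exists (undup S) => [|j].
    exact: undup_uniq.
  rewrite mem_undup => jS; apply: (coord_inj (basis_e := basis_e)) => k.
  rewrite linear0.
  by apply: contrapT => /eqP nz; apply: none; exists j => //; exists k.
have R_col k j : coord k (nu (coord j)) != 0 -> k \in supp (nu (coord j)).
  exact: coord_supp.
have R_row k j : coord k (nu (coord j)) != 0 -> j \in supp (mu (coord k)).
  by rewrite -pairing; apply: coord_supp.
have [k [j R_kj]] := gliding_hump R_col R_row infinite.
pose beta : algdual V := dual_ext basis_e (fun i => `[< exists n, i = k n >]%:R).
have beta_nu m : beta (nu (coord (j m))) = coord (k m) (nu (coord (j m))).
  rewrite /= /dual_ext (big_uniq_supp (supp_uniq _ _) (s := [:: k m])) //.
    by rewrite big_seq1 asboolT ?mul1r //; exists m.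
  move=> i; rewrite mulf_eq0 negb_or => /andP[].
  case: asboolP => [[n ->] _ R_nm | _]; last by rewrite mulr0n eqxx.
  by rewrite coord_supp // mem_seq1 ((R_kj m n).1 R_nm) eqxx.
have j_supp m : j m \in supp (mu beta).
  by apply: coord_supp; rewrite pairing beta_nu; apply/(R_kj m m).2.
have j_inj : injective j.
  by move=> m n jmn; apply/(R_kj m n).1; rewrite jmn; apply/(R_kj n n).2.
suff : (size (supp (mu beta)) < size (supp (mu beta)))%N by rewrite ltnn.
rewrite -[X in (X <= _)%N](size_iota 0) -(size_map j); apply: uniq_leq_size.
  by rewrite map_inj_uniq ?iota_uniq.
by move=> _ /mapP[n _ ->].
Qed.

Section FiniteRank.
Variable J : seq I.
Hypotheses (J_uniq : uniq J) (nu_coord_J : forall j, j \notin J -> nu (coord j) = 0).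

Lemma mu_expand beta : mu beta = \sum_(j <- J) beta (nu (coord j)) *: e j.
Proof.
rewrite {1}(coord_expand_on (basis_e := basis_e) (v := mu beta) J_uniq) => [|j].
  by under eq_bigr do rewrite pairing.
by rewrite pairing; apply: contraR => /nu_coord_J ->; rewrite linear0.
Qed.

Lemma nu_expand alpha : nu alpha = \sum_(j <- J) alpha (e j) *: nu (coord j).
Proof.
apply: (coord_inj (basis_e := basis_e)) => k.
rewrite -pairing mu_expand !linear_sum.
by apply: eq_bigr => j _; rewrite !linearZ /= mulrC.
Qed.

Let L := undup (flatten [seq supp (nu (coord j)) | j <- J]).
Let iJ := tnth (in_tuple J).
Let iL := tnth (in_tuple L).
Let G := \matrix_(t < size J, l < size L) coord (iL l) (nu (coord (iJ t))).

Lemma nu_coord_row t : nu (coord (iJ t)) = lincomb (e \o iL) (row t G).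
Proof.
rewrite /lincomb; under eq_bigr do rewrite !mxE.
rewrite -(big_tuple _ _ (in_tuple L) predT
                   (fun k => coord k (nu (coord (iJ t))) *: e k)).
apply: coord_expand_on; first exact: undup_uniq.
move=> k /coord_supp k_supp; rewrite mem_undup; apply/flatten_mapP.
by exists (iJ t); rewrite ?mem_tnth.
Qed.

Lemma mu_lincomb beta : mu beta = lincomb (e \o iJ) ((\row_l beta (e (iL l))) *m G^T).
Proof.
rewrite mu_expand.
rewrite (big_tuple _ _ (in_tuple J) predT (fun j => beta (nu (coord j)) *: e j)).
apply: eq_bigr => t _; rewrite nu_coord_row linear_sum !mxE; congr (_ *: _).
by apply: eq_bigr => l _; rewrite linearZ /= !mxE mulrC.
Qed.

Lemma nu_lincomb alpha : nu alpha = lincomb (e \o iL) ((\row_t alpha (e (iJ t))) *m G).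
Proof.
rewrite nu_expand lincomb_mulmx.
rewrite (big_tuple _ _ (in_tuple J) predT (fun j => alpha (e j) *: nu (coord j))).
by apply: eq_bigr => t _; rewrite nu_coord_row mxE.
Qed.

Lemma paired_images_dim : exists n, has_dim (img mu) n /\ has_dim (img nu) n.
Proof.
have iJ_inj : injective iJ by apply/tuple_uniqP.
have iL_inj : injective iL by apply/tuple_uniqP; exact: undup_uniq.
have row_surj n (iota : 'I_n -> I) (y : 'rV_n) : injective iota ->
    exists beta : algdual V, \row_l beta (e (iota l)) = y.
  move=> iota_inj; have [beta betaE] := dual_interp basis_e (fun l => y 0 l) iota_inj.
  by exists beta; apply/rowP => l; rewrite mxE betaE.
exists (\rank G); split.
- rewrite -mxrank_tr; have := has_dim_img_lincomb G^T (lincomb_basis_eq0 basis_e iJ_inj).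
  by move/has_dim_img_factor; apply; [exact: mu_lincomb | move=> y; apply: row_surj].
- have := has_dim_img_lincomb G (lincomb_basis_eq0 basis_e iL_inj).
  by move/has_dim_img_factor; apply; [exact: nu_lincomb | move=> x; apply: row_surj].
Qed.

End FiniteRank.

End PairedMaps.

Theorem lemmaA1 (R : realType) (A : lmodType R[i])
  (hA : countable_dim A)
  (mu nu : algdual A -> A)
  (hmu : dual_linear mu) (hnu : dual_linear nu)
  (hpair : forall alpha beta : algdual A, alpha (mu beta) = beta (nu alpha)) :
  exists n : nat, has_dim (img mu) n /\ has_dim (img nu) n.
Proof.
have [I [e basis_e]] := hA.
have [J J_uniq nu_coord_J] := finite_nu_coord basis_e hpair.
exact: paired_images_dim J_uniq nu_coord_J.
Qed.
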